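(* For each $l\in\mathbb N$ there exists a constant $B_l$ such that, for each $j\in\mathbb N$ and all large enough $t$, $$\big|\mathbb E K^{(j)}_t(l)-\mathbb E\mathcal K^{(j)}_{\lfloor t\rfloor}(l)\big|\le B_l;$$ the constant $B_l$ does not depend on $j$.
   Context: Let $(p_k)_{k\in\mathbb N}$ be a probability distribution on $\mathbb N$ with $p_k>0$ for infinitely many $k$. For a word $r=r_1\cdots r_j\in\mathbb N^j$ write $|r|=j$, $p_r:=p_{r_1}\cdots p_{r_j}$; words of length $j$ are the generation-$j$ boxes. Nested Karlin occupancy scheme: balls $1,2,\ldots$ are thrown independently; ball $i$ carries an i.i.d. sequence $\xi_{i,1},\xi_{i,2},\ldots$ with law $(p_k)$ and lies, in generation $j$, in box $\xi_{i,1}\cdots\xi_{i,j}$. $\mathcal K_n^{(j)}(l)$ is the number of generation-$j$ boxes containing at least $l$ of balls $1,\ldots,n$; with $(\pi(t))_{t\ge0}$ a unit-rate Poisson process independent of the balls, $K^{(j)}_t(l):=\mathcal K^{(j)}_{\pi(t)}(l)$. *)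

From HB Require Import structures.
From mathcomp Require Import all_boot all_order all_algebra.
From mathcomp Require Import all_classical all_reals all_analysis.
Set Implicit Arguments. Unset Strict Implicit. Unset Printing Implicit Defensive.
Import Order.TTheory GRing.Theory Num.Theory.
Local Open Scope ring_scope.
Local Open Scope classical_set_scope.

Definition wordprob {R : realType} (p : nat -> R) (r : seq nat) : R :=
  \prod_(k <- r) p k.

(* P(Bin(n,q) >= l) : the probability that at least l of n independent balls
   fall in a box of probability q *)
Definition bin_tail {R : realType} (n l : nat) (q : R) : R :=
  \sum_(l <= k < n.+1) ('C(n, k))%:R * q ^+ k * (1 - q) ^+ (n - k).

(* E K_n^{(j)}(l) = sum over generation-j boxes r of P(box r holds >= l balls) *)
Definition EKn {R : realType} (p : nat -> R) (j n l : nat) : \bar R :=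
  (\esum_(r in [set r : seq nat | size r = j]) (bin_tail n l (wordprob p r))%:E)%E.

(* E K_t^{(j)}(l) = sum_n P(pi(t) = n) E K_n^{(j)}(l) (conditioning on pi(t)) *)
Definition EKt {R : realType} (p : nat -> R) (j : nat) (t : R) (l : nat) : \bar R :=
  (\sum_(0 <= n <oo) ((expR (- t) * t ^+ n / (n`!)%:R)%:E * EKn p j n l))%E.

From HB Require Import structures.
From mathcomp Require Import all_boot all_order all_algebra.
From mathcomp Require Import all_classical all_reals all_analysis.
From mathcomp Require Import ring lra zify.
Import Order.TTheory GRing.Theory Num.Theory.
Local Open Scope ring_scope.
Local Open Scope classical_set_scope.
Set Implicit Arguments. Unset Strict Implicit. Unset Printing Implicit Defensive.

(* For a box of probability q, g(n) = P(Bin(n, q) >= l) has increments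
   g(n+1) - g(n) = q P(Bin(n, q) = l - 1), and these change by at most q l / (n+1)
   per step.  Hence g is nearly affine around m = floor t:
   |g(n) - g(m) - (g(m+1) - g(m)) (n - m)| <= q l (n - m)^2 / (min(n, m) + 1).
   Averaging over n ~ Poisson(t), the affine part moves g(m) by at most q (t - m) <= q,
   and the quadratic error has Poisson mean at most 5 q l when 1 <= m <= t < m + 1.
   Summing over the generation-j boxes, whose probabilities add up to at most 1, gives
   |E K_t - E K_m| <= 1 + 5 l whatever j is. *)

Section SecondOrderTelescope.
Variable R : realFieldType.

Lemma ler_dist_telescope (h : nat -> R) (e : R) a b :
  (forall i, (minn a b <= i < maxn a b)%N -> `|h i.+1 - h i| <= e) ->
  `|h a - h b| <= e * `|a%:R - b%:R|.
Proof.
wlog ab : a b / (a <= b)%N => [ordered hstep|].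
  have [ab|ba] := leqP a b; first exact: ordered ab hstep.
  rewrite distrC [`|a%:R - _|]distrC; apply: ordered; first exact: ltnW.
  by move=> i; rewrite minnC maxnC; apply: hstep.
rewrite (minn_idPl ab) (maxn_idPr ab) distrC (distrC a%:R).
have [d ->] : exists d, b = (a + d)%N by exists (b - a)%N; rewrite subnKC.
rewrite natrD addrAC subrr add0r normr_nat.
elim: d => [|d IH] hstep; first by rewrite addn0 subrr normr0 mulr0.
rewrite addnS -(subrKA (h (a + d)%N)) (le_trans (ler_normD _ _)) //.
rewrite -natr1 mulrDr mulr1 addrC lerD ?hstep //; last by lia.
by apply: IH => i hi; apply: hstep; lia.
Qed.

Lemma ler_dist_taylor2 (G d : nat -> R) (e : R) :
  (forall i, G i.+1 = G i + d i) ->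
  (forall i, `|d i.+1 - d i| <= e / i.+1%:R) ->
  forall n m, `|G n - G m - d m * (n%:R - m%:R)|
    <= e * (n%:R - m%:R) ^+ 2 / (minn n m).+1%:R.
Proof.
move=> GS dS n m.
have e_ge0 : 0 <= e by have := dS 0%N; rewrite divr1; apply: le_trans.
set c := e / (minn n m).+1%:R.
have c_ge0 : 0 <= c by rewrite divr_ge0.
have slope i : (minn n m <= i < maxn n m)%N -> `|d i - d m| <= c * `|n%:R - m%:R|.
  move=> hi; apply: (le_trans (y := c * `|i%:R - m%:R|)).
    apply: ler_dist_telescope => k /andP[hk _]; apply: le_trans (dS k) _.
    rewrite ler_wpM2l // lef_pV2 ?posrE ?ltr0n // ler_nat ltnS; lia.
  rewrite ler_wpM2l //.
  have [nm|/ltnW mn] := leqP n m; move: hi.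
    rewrite (minn_idPl nm) (maxn_idPr nm) => /andP[ni /ltnW im].
    have : n%:R <= i%:R :> R by rewrite ler_nat.
    have : i%:R <= m%:R :> R by rewrite ler_nat.
    by move=> *; rewrite !ler0_norm ?subr_le0 //; lra.
  rewrite (minn_idPr mn) (maxn_idPl mn) => /andP[mi /ltnW iN].
  have : m%:R <= i%:R :> R by rewrite ler_nat.
  have : i%:R <= n%:R :> R by rewrite ler_nat.
  by move=> *; rewrite !ger0_norm ?subr_ge0 //; lra.
pose hx i := G i - d m * i%:R.
have -> : G n - G m - d m * (n%:R - m%:R) = hx n - hx m by rewrite /hx; ring.
apply: (le_trans (y := c * `|n%:R - m%:R| * `|n%:R - m%:R|)).
  apply: ler_dist_telescope => i hi.
  by rewrite /hx GS -natr1 (_ : _ - _ = d i - d m) ?slope //; ring.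
by rewrite -mulrA -normrM -expr2 ger0_norm ?sqr_ge0 // /c mulrAC.
Qed.

End SecondOrderTelescope.

Section BinomialTail.
Variables (R : realType) (q : R).
Hypotheses (q_ge0 : 0 <= q) (q_le1 : q <= 1).

Definition binpmf (k n : nat) : R := 'C(n, k)%:R * q ^+ k * (1 - q) ^+ (n - k).

Lemma binpmf_ge0 k n : 0 <= binpmf k n.
Proof. by rewrite /binpmf !mulr_ge0 // exprn_ge0 // subr_ge0. Qed.

Lemma binpmf_small k n : (n < k)%N -> binpmf k n = 0.
Proof. by move=> nk; rewrite /binpmf bin_small // !mul0r. Qed.

Lemma binpmf0S n : binpmf 0 n.+1 = (1 - q) * binpmf 0 n.
Proof. by rewrite /binpmf !bin0 !expr0 !mul1r !subn0 exprS. Qed.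

Lemma binpmfSS k n : binpmf k.+1 n.+1 = (1 - q) * binpmf k.+1 n + q * binpmf k n.
Proof.
rewrite /binpmf binS natrD subSS exprS.
have [nk|kn] := ltnP n k.+1; first by rewrite bin_small //; ring.
by rewrite -(subnSK kn) exprS; ring.
Qed.

Lemma binpmf_le1 k n : binpmf k n <= 1.
Proof.
elim: n k => [|n IH] [|k].
- by rewrite /binpmf bin0 !expr0 !mulr1.
- by rewrite binpmf_small.
- by rewrite binpmf0S mulr_ile1 ?subr_ge0 ?binpmf_ge0 // lerBlDr lerDl.
apply: (le_trans (y := (1 - q) * 1 + q * 1)); last by rewrite !mulr1 subrK.
by rewrite binpmfSS lerD // ler_wpM2l ?subr_ge0.
Qed.

Lemma binpmf_absorption k n : n.+1%:R * (q * binpmf k n) = k.+1%:R * binpmf k.+1 n.+1.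
Proof.
have /(congr1 (fun x : nat => x%:R : R)) := mul_bin_diag n.+1 k.
rewrite /binpmf subSS !natrM /= => Cabs.
rewrite exprS.
transitivity (n.+1%:R * 'C(n, k)%:R * (q * q ^+ k) * (1 - q) ^+ (n - k)); first by ring.
by rewrite Cabs; ring.
Qed.

Lemma binpmf_mass_le k n : q * binpmf k n <= k.+1%:R / n.+1%:R.
Proof.
rewrite ler_pdivlMr // mulrC binpmf_absorption.
by rewrite ler_piMr ?binpmf_le1.
Qed.

Lemma binpmf_step k n : `|binpmf k n.+1 - binpmf k n| <= k.+1%:R / n.+1%:R.
Proof.
case: k => [|k].
  rewrite binpmf0S (_ : _ - _ = - (q * binpmf 0 n)); last by ring.
  rewrite normrN ger0_norm ?(mulr_ge0 q_ge0 (binpmf_ge0 _ _)) //.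
  exact: (binpmf_mass_le 0 n).
rewrite binpmfSS (_ : _ - _ = q * binpmf k n - q * binpmf k.+1 n); last by ring.
have lek : k.+1%:R / n.+1%:R <= k.+2%:R / n.+1%:R :> R.
  by rewrite ler_pM2r ?invr_gt0 ?ltr0n // ler_nat.
have := binpmf_mass_le k n; have := binpmf_mass_le k.+1 n.
have := mulr_ge0 q_ge0 (binpmf_ge0 k n); have := mulr_ge0 q_ge0 (binpmf_ge0 k.+1 n).
move: lek; set a := k.+1%:R / _; set b := k.+2%:R / _.
set x := q * binpmf k n; set y := q * binpmf k.+1 n.
by move=> *; rewrite ler_norml; apply/andP; split; lra.
Qed.

Lemma bin_tail_ge0 n l : 0 <= bin_tail n l q.
Proof. by apply: sumr_ge0 => k _; apply: binpmf_ge0. Qed.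

Lemma bin_tail_widen n l N : (n < N)%N -> bin_tail n l q = \sum_(l <= k < N) binpmf k n.
Proof.
move=> nN; rewrite /bin_tail (big_nat_widen _ _ _ _ _ nN) big_mkcond /=.
by apply: eq_bigr => k _; case: ltnP => // nk; rewrite binpmf_small.
Qed.

Lemma bin_tailS n k : bin_tail n.+1 k.+1 q = bin_tail n k.+1 q + q * binpmf k n.
Proof.
rewrite (@bin_tail_widen _ _ (n + k).+2) ?big_add1 /=; last by lia.
under eq_bigr do rewrite binpmfSS.
rewrite big_split /= -!mulr_sumr.
have -> : \sum_(k <= i < (n + k).+1) binpmf i.+1 n = bin_tail n k.+1 q.
  by rewrite (@bin_tail_widen _ _ (n + k).+2) ?big_add1 //; lia.
have -> : \sum_(k <= i < (n + k).+1) binpmf i n = binpmf k n + bin_tail n k.+1 q.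
  by rewrite big_ltn ?(@bin_tail_widen _ _ (n + k).+1) //; lia.
ring.
Qed.

Lemma bin_tail_le n k : bin_tail n k.+1 q <= n%:R * q.
Proof.
elim: n => [|n IH]; first by rewrite /bin_tail big_geq // mul0r.
rewrite bin_tailS -natr1 mulrDl mul1r lerD //.
by rewrite ler_piMr ?binpmf_le1.
Qed.

Lemma bin_tail_taylor2 k n m :
  `|bin_tail n k.+1 q - bin_tail m k.+1 q - q * binpmf k m * (n%:R - m%:R)|
    <= q * k.+1%:R * (n%:R - m%:R) ^+ 2 / (minn n m).+1%:R.
Proof.
apply: (ler_dist_taylor2 (G := fun n => bin_tail n k.+1 q) (d := fun i => q * binpmf k i)).
  by move=> i; apply: bin_tailS.
move=> i /=.
rewrite -mulrBr normrM ger0_norm // -!mulrA ler_wpM2l //.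
exact: binpmf_step.
Qed.

End BinomialTail.

Section ExtendedRealSeries.
Variable R : realType.

Lemma nonneg_le_EFin (x : \bar R) (y : R) :
  (0 <= x)%E -> (x <= y%:E)%E -> exists2 r : R, x = r%:E & 0 <= r <= y.
Proof. by case: x => [r||] //= r_ge0 ry; exists r; rewrite -?lee_fin ?r_ge0. Qed.

Lemma nneseries_recl0 (f : nat -> \bar R) : (forall i, 0 <= f i)%E ->
  (\sum_(0 <= i <oo) f i = f 0%N + \sum_(0 <= i <oo) f i.+1)%E.
Proof.
move=> f_ge0; rewrite (@nneseries_recl _ xpredT) // -(nneseries_addn 1%N) //.
by congr (_ + _); apply: eq_eseriesr => n _; rewrite addn1.
Qed.

Lemma eseries_exp_coeff (x : R) : (\sum_(0 <= n <oo) (exp_coeff x n)%:E = (expR x)%:E)%E.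
Proof.
rewrite -EFin_lim; last exact: is_cvg_series_exp_coeff.
by congr (limn _); apply/funext => N /=; rewrite sumEFin.
Qed.

Lemma eq_subEFin (x : \bar R) (a b : R) : (x + a%:E)%E = b%:E -> x = (b - a)%:E.
Proof. by case: x => // r [<-]; rewrite addrK. Qed.

End ExtendedRealSeries.

Section EsumScale.
Variables (R : realType) (T : choiceType) (S : set T).
Local Open Scope ereal_scope.

Lemma esumZl_le (c : R) (a : T -> \bar R) : (0 <= c)%R -> (forall i, 0 <= a i) ->
  \esum_(i in S) (c%:E * a i) <= c%:E * \esum_(i in S) a i.
Proof.
move=> c_ge0 a_ge0; apply: ge_ereal_sup => _ [X XS <-] /=.
rewrite -ge0_mule_fsumr // lee_wpmul2l ?lee_fin //.
by apply: ereal_sup_ubound; exists X.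
Qed.

Lemma esumZl (c : R) (a : T -> \bar R) : (0 <= c)%R -> (forall i, 0 <= a i) ->
  \esum_(i in S) (c%:E * a i) = c%:E * \esum_(i in S) a i.
Proof.
move=> c_ge0 a_ge0; apply/eqP; rewrite eq_le esumZl_le //=.
have [->|c_neq0] := eqVneq c 0%R.
  by rewrite mul0e esum_ge0 // => i _; rewrite mul0e.
have c_gt0 : (0 < c)%R by rewrite lt_def c_neq0.
rewrite -lee_pdivlMl //; apply: le_trans (esumZl_le _ _); last first.
- by move=> i; rewrite mule_ge0.
- by rewrite invr_ge0.
by under [X in _ <= X]eq_esum do rewrite muleA -EFinM mulVf ?mul1e //.
Qed.

End EsumScale.

Section WordProbabilities.
Variables (R : realType) (p : nat -> R).
Hypotheses (p_ge0 : forall k, 0 <= p k)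
           (p_sum_le1 : (\sum_(0 <= k <oo) (p k)%:E <= 1)%E).
Local Open Scope ereal_scope.

Lemma wordprob_ge0 r : (0 <= wordprob p r)%R.
Proof. exact: prodr_ge0. Qed.

Lemma esum_wordprob_le1 j : \esum_(r in [set r : seq nat | size r = j]) (wordprob p r)%:E <= 1.
Proof.
elim: j => [|j IH].
  have -> : [set r : seq nat | size r = 0%N] = [set [::]].
    by apply/seteqP; split => r /=; [move/size0nil|move->].
  by rewrite esum_set1 /wordprob ?big_nil // lee_fin.
have -> : [set r : seq nat | size r = j.+1] =
    (fun kr : nat * seq nat => kr.1 :: kr.2) @` ([set: nat] `*` [set r | size r = j]).
  apply/seteqP; split => r /=.
    by case: r => // k r [rj]; exists (k, r).
  by move=> [[k r'] [_ /= rj] <-] /=; rewrite rj.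
rewrite esum_image; last by move=> [k1 r1] [k2 r2] _ _ /= [-> ->].
rewrite (_ : _ `*` _ = [set: nat] `*`` fun=> [set r | size r = j]) //.
rewrite -(esum_esum (a := fun k r => (wordprob p (k :: r))%:E)) /=; last first.
  by move=> k r _ _; rewrite lee_fin wordprob_ge0.
rewrite (eq_esum (b := fun k => (p k)%:E * \esum_(r in [set r | size r = j]) (wordprob p r)%:E)).
  apply: le_trans (p_sum_le1); rewrite nneseries_esumT //.
  by apply: le_esum => k _; rewrite -[leRHS]mule1 lee_wpmul2l // lee_fin.
move=> k _; rewrite -esumZl // => [|r]; last by rewrite lee_fin wordprob_ge0.
by apply: eq_esum => r _; rewrite /wordprob big_cons EFinM.
Qed.

Lemma wordprob_le1 r : (wordprob p r <= 1)%R.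
Proof.
rewrite -lee_fin; apply: le_trans (esum_wordprob_le1 (size r)).
apply: esum_ge; exists [set r]; last by rewrite fsbig_set1.
by split; [exact: finite_set1|move=> x /= ->].
Qed.

End WordProbabilities.

Section PoissonMean.
Variables (R : realType) (t : R).
Hypothesis t_gt0 : 0 < t.

Definition poisson_weight (n : nat) : R := expR (- t) * t ^+ n / (n`!)%:R.

Lemma poisson_weight_ge0 n : 0 <= poisson_weight n.
Proof. by rewrite /poisson_weight !mulr_ge0 ?expR_ge0 ?exprn_ge0 ?invr_ge0 // ltW. Qed.

Lemma poisson_weightS n : poisson_weight n.+1 = t * poisson_weight n / n.+1%:R.
Proof.
have n1_neq0 : (n.+1%:R : R) != 0 by rewrite pnatr_eq0.
have fact_neq0 : ((n`!)%:R : R) != 0 by rewrite pnatr_eq0 -lt0n fact_gt0.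
by rewrite /poisson_weight factS natrM invfM exprS; field; apply/andP.
Qed.

Definition poisson_mean (u : nat -> R) : \bar R :=
  (\sum_(0 <= n <oo) (poisson_weight n * u n)%:E)%E.

Lemma eq_poisson_mean u v : u =1 v -> poisson_mean u = poisson_mean v.
Proof. by move=> /funext ->. Qed.

Lemma poisson_mean_ge0 u : (forall n, 0 <= u n) -> (0 <= poisson_mean u)%E.
Proof.
by move=> u_ge0; apply: nneseries_ge0 => n _ _; rewrite lee_fin mulr_ge0 ?poisson_weight_ge0.
Qed.

Lemma poisson_meanD u v : (forall n, 0 <= u n) -> (forall n, 0 <= v n) ->
  poisson_mean (fun n => u n + v n) = (poisson_mean u + poisson_mean v)%E.
Proof.
move=> u_ge0 v_ge0; rewrite /poisson_mean -nneseriesD.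
  by apply: eq_eseriesr => n _; rewrite mulrDr EFinD.
all: by move=> n _ _; rewrite lee_fin mulr_ge0 ?poisson_weight_ge0.
Qed.

Lemma poisson_meanZ c u : 0 <= c -> (forall n, 0 <= u n) ->
  poisson_mean (fun n => c * u n) = (c%:E * poisson_mean u)%E.
Proof.
move=> c_ge0 u_ge0; rewrite /poisson_mean -nneseriesZl.
  by apply: eq_eseriesr => n _; rewrite -EFinM mulrCA.
by move=> n _; rewrite lee_fin mulr_ge0 ?poisson_weight_ge0.
Qed.

Lemma poisson_mean_shift u : (forall n, 0 <= u n) ->
  poisson_mean u =
  ((expR (- t) * u 0%N)%:E + t%:E * poisson_mean (fun n => u n.+1 / n.+1%:R)%R)%E.
Proof.
move=> u_ge0; rewrite /poisson_mean nneseries_recl0; last first.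
  by move=> n; rewrite lee_fin mulr_ge0 ?poisson_weight_ge0.
congr (_ + _); first by rewrite /poisson_weight expr0 fact0 divr1 mulr1.
rewrite -nneseriesZl; last by move=> n _; rewrite lee_fin mulr_ge0 ?poisson_weight_ge0 ?divr_ge0.
apply: eq_eseriesr => n _; rewrite -EFinM poisson_weightS.
have n1_neq0 : (n.+1%:R : R) != 0 by rewrite pnatr_eq0.
by congr (_%:E); field.
Qed.

Lemma poisson_mean1 : poisson_mean (fun=> 1) = 1%E.
Proof.
rewrite /poisson_mean (eq_eseriesr (g := fun n => (expR (- t))%:E * (exp_coeff t n)%:E)%E).
  rewrite nneseriesZl; last by move=> n _; rewrite lee_fin exp_coeff_ge0 // ltW.
  by rewrite eseries_exp_coeff -EFinM mulrC expRxMexpNx_1.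
by move=> n _; rewrite -EFinM mulr1 /poisson_weight /exp_coeff /= mulrA.
Qed.

Lemma poisson_mean_cst x : 0 <= x -> poisson_mean (fun=> x) = x%:E.
Proof.
move=> x_ge0; rewrite (eq_poisson_mean (v := fun=> x * 1)) => [|n]; last by rewrite mulr1.
by rewrite poisson_meanZ // poisson_mean1 mule1.
Qed.

Lemma poisson_mean_id : poisson_mean (fun n => n%:R) = t%:E.
Proof.
rewrite poisson_mean_shift // mulr0 add0e.
rewrite (eq_poisson_mean (v := fun=> 1)) ?poisson_mean1 ?mule1 // => n.
by rewrite divff // pnatr_eq0.
Qed.

Lemma poisson_mean_sqr : poisson_mean (fun n => n%:R ^+ 2) = (t * (t + 1))%:E.
Proof.
rewrite poisson_mean_shift; last by move=> n; rewrite sqr_ge0.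
rewrite expr0n mulr0 add0e (eq_poisson_mean (v := fun n => n%:R + 1)).
  by rewrite poisson_meanD // poisson_mean_id poisson_mean1 -EFinD -EFinM.
move=> n; have n1_neq0 : (n%:R + 1 : R) != 0 by rewrite natr1 pnatr_eq0.
by rewrite -natr1; field.
Qed.

Lemma poisson_mean_invS : poisson_mean (fun n => n.+1%:R^-1) = ((1 - expR (- t)) / t)%:E.
Proof.
have := poisson_mean1; rewrite poisson_mean_shift // mulr1.
rewrite (eq_poisson_mean (v := fun n => n.+1%:R^-1)); last by move=> n; rewrite div1r.
have : (0 <= poisson_mean (fun n => n.+1%:R^-1)%R)%E.
  by apply: poisson_mean_ge0 => n; rewrite invr_ge0.
case: (poisson_mean _) => [r||] //= _; last by rewrite mulry gtr0_sg // mul1e.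
rewrite -EFinM -EFinD => -[Er]; congr (_%:E); rewrite -Er.
by field; rewrite gt_eqF.
Qed.

Variable s : R.
Hypothesis s_ge0 : 0 <= s.

(* Here and below the identity is rearranged so that all functions involved are
   nonnegative, since [poisson_mean] is only additive on those. *)
Lemma poisson_mean_sqr_dev : poisson_mean (fun n => (n%:R - s) ^+ 2) = ((t - s) ^+ 2 + t)%:E.
Proof.
have E : poisson_mean (fun n => (n%:R - s) ^+ 2 + (2 * s) * n%:R) =
         poisson_mean (fun n => n%:R ^+ 2 + s ^+ 2 * 1).
  by apply: eq_poisson_mean => n; ring.
rewrite !poisson_meanD ?poisson_meanZ ?poisson_mean_id ?poisson_mean_sqr ?poisson_mean1 in E;
  try by [move=> n; rewrite ?sqr_ge0 ?mulr_ge0 | rewrite ?sqr_ge0 ?mulr_ge0].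
by rewrite mule1 -EFinM -EFinD in E; rewrite (eq_subEFin E); congr (_%:E); ring.
Qed.

Lemma poisson_mean_sqr_dev_invS :
  poisson_mean (fun n => (n%:R - s) ^+ 2 / n.+1%:R) =
  (t + 1 + (s + 1) ^+ 2 * ((1 - expR (- t)) / t) - 2 * (s + 1))%:E.
Proof.
have E : poisson_mean (fun n => (n%:R - s) ^+ 2 / n.+1%:R + (2 * (s + 1)) * 1) =
         poisson_mean (fun n => (n%:R + 1) + (s + 1) ^+ 2 * n.+1%:R^-1).
  apply: eq_poisson_mean => n; rewrite -natr1.
  have n1_neq0 : (n%:R + 1 : R) != 0 by rewrite natr1 pnatr_eq0.
  by field.
rewrite !poisson_meanD ?poisson_meanZ ?poisson_mean_id ?poisson_mean1 ?poisson_mean_invS in E;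
  try by [move=> n; rewrite ?divr_ge0 ?sqr_ge0 ?mulr_ge0 ?addr_ge0 ?invr_ge0
         | rewrite ?mulr_ge0 ?addr_ge0 ?sqr_ge0].
by rewrite mule1 -!EFinM -!EFinD in E; rewrite (eq_subEFin E).
Qed.

Lemma poisson_mean_sqr_dev_le : 1 <= s -> s <= t -> t < s + 1 ->
  (poisson_mean (fun n => (n%:R - s) ^+ 2 * (n.+1%:R^-1 + (s + 1)^-1))%R <= 5%:E)%E.
Proof.
move=> s_ge1 st ts.
rewrite (eq_poisson_mean (v := fun n => (n%:R - s) ^+ 2 / n.+1%:R + (s + 1)^-1 * (n%:R - s) ^+ 2));
  last by move=> n; ring.
rewrite poisson_meanD; last 2 first.
- by move=> n; rewrite divr_ge0 ?sqr_ge0.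
- by move=> n; rewrite mulr_ge0 ?sqr_ge0 ?invr_ge0 ?addr_ge0.
rewrite poisson_meanZ ?invr_ge0 ?addr_ge0 //; last by move=> n; apply: sqr_ge0.
rewrite poisson_mean_sqr_dev_invS poisson_mean_sqr_dev -EFinM -EFinD lee_fin.
have s_gt0 : 0 < s by lra.
have exp_gt0 : 0 < expR (- t) := expR_gt0 _.
have inv_le : (1 - expR (- t)) / t <= s^-1.
  apply: (le_trans (y := t^-1)); last by rewrite lef_pV2 ?posrE //; lra.
  by rewrite ler_pdivrMr // mulVf ?gt_eqF //; lra.
have first_le : (s + 1) ^+ 2 * ((1 - expR (- t)) / t) <= s + 3.
  apply: (le_trans (y := (s + 1) ^+ 2 * s^-1)); first by rewrite ler_wpM2l ?sqr_ge0.
  by rewrite ler_pdivrMr //; nra.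
have second_le : (s + 1)^-1 * ((t - s) ^+ 2 + t) <= 2.
  rewrite mulrC ler_pdivrMr; last by lra.
  have : (t - s) ^+ 2 <= 1 by rewrite expr2; nra.
  lra.
lra.
Qed.

End PoissonMean.

Section Poissonized.
Variables (R : realType) (t : R) (T : choiceType) (W : set T).
Hypothesis t_gt0 : 0 < t.

Let esum_EFin_ge0 (f : T -> R) : (forall r, 0 <= f r) -> (0 <= \esum_(r in W) (f r)%:E)%E.
Proof. by move=> f_ge0; apply: esum_ge0 => r _; rewrite lee_fin. Qed.

Definition poissonized (h : T -> nat -> R) : \bar R :=
  (\sum_(0 <= n <oo) ((poisson_weight t n)%:E * \esum_(r in W) (h r n)%:E))%E.

Lemma poissonized_ge0 h : (forall r n, 0 <= h r n) -> (0 <= poissonized h)%E.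
Proof.
move=> h_ge0; apply: nneseries_ge0 => n _ _.
by rewrite mule_ge0 ?lee_fin ?poisson_weight_ge0 ?esum_EFin_ge0.
Qed.

Lemma poissonizedD h1 h2 : (forall r n, 0 <= h1 r n) -> (forall r n, 0 <= h2 r n) ->
  poissonized (fun r n => h1 r n + h2 r n) = (poissonized h1 + poissonized h2)%E.
Proof.
move=> h1_ge0 h2_ge0; rewrite /poissonized -nneseriesD; last 2 first.
- by move=> n _ _; rewrite mule_ge0 ?lee_fin ?poisson_weight_ge0 ?esum_EFin_ge0.
- by move=> n _ _; rewrite mule_ge0 ?lee_fin ?poisson_weight_ge0 ?esum_EFin_ge0.
apply: eq_eseriesr => n _; rewrite -ge0_muleDr ?esum_EFin_ge0 // -esumD.
- by congr (_ * _)%E; apply: eq_esum => r _; rewrite EFinD.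
- by move=> r _; rewrite lee_fin.
- by move=> r _; rewrite lee_fin.
Qed.

Lemma poissonizedM (c : T -> R) (u : nat -> R) (C : R) :
  (forall r, 0 <= c r) -> (forall n, 0 <= u n) -> \esum_(r in W) (c r)%:E = C%:E ->
  poissonized (fun r n => c r * u n) = (C%:E * poisson_mean t u)%E.
Proof.
move=> c_ge0 u_ge0 esumC; rewrite /poisson_mean -nneseriesZl; last first.
  by move=> n _; rewrite lee_fin mulr_ge0 ?poisson_weight_ge0.
apply: eq_eseriesr => n _; under eq_esum do rewrite mulrC EFinM.
by rewrite esumZl // esumC -!EFinM mulrA mulrC.
Qed.

Lemma le_poissonized h1 h2 : (forall r n, 0 <= h1 r n) -> (forall r n, h1 r n <= h2 r n) ->
  (poissonized h1 <= poissonized h2)%E.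
Proof.
move=> h1_ge0 h12; apply: lee_nneseries => n _.
  by rewrite mule_ge0 ?lee_fin ?poisson_weight_ge0 ?esum_EFin_ge0.
by rewrite lee_wpmul2l ?lee_fin ?poisson_weight_ge0 // le_esum // => r _; rewrite lee_fin.
Qed.

Section AffineApproximation.
Variables (h : T -> nat -> R) (c a w : T -> R) (u : nat -> R) (s C A Q U : R).
Hypotheses (h_ge0 : forall r n, 0 <= h r n) (c_ge0 : forall r, 0 <= c r)
  (a_ge0 : forall r, 0 <= a r) (w_ge0 : forall r, 0 <= w r)
  (u_ge0 : forall n, 0 <= u n) (s_ge0 : 0 <= s).
Hypotheses (esumC : \esum_(r in W) (c r)%:E = C%:E) (esumA : \esum_(r in W) (a r)%:E = A%:E)
  (esumQ : \esum_(r in W) (w r)%:E = Q%:E) (meanU : poisson_mean t u = U%:E).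
Hypothesis h_approx : forall r n, `|h r n - c r - a r * (n%:R - s)| <= w r * u n.

Lemma poissonized_affine_approx : (`|poissonized h - (C + A * (t - s))%:E| <= (Q * U)%:E)%E.
Proof.
have Pc : poissonized (fun r n => c r * 1) = C%:E.
  by rewrite (poissonizedM (u := fun=> 1) c_ge0 _ esumC) // poisson_mean1 // mule1.
have Pan : poissonized (fun r n => a r * n%:R) = (A * t)%:E.
  by rewrite (poissonizedM (u := fun n => n%:R) a_ge0 _ esumA) // poisson_mean_id // -EFinM.
have Pas : poissonized (fun r n => a r * s) = (A * s)%:E.
  by rewrite (poissonizedM (u := fun=> s) a_ge0 _ esumA) // poisson_mean_cst // -EFinM.
have Pwu : poissonized (fun r n => w r * u n) = (Q * U)%:E.
  by rewrite (poissonizedM w_ge0 u_ge0 esumQ) meanU -EFinM.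
(* The error is moved to whichever side keeps every summand nonnegative: [poissonized] is
   only additive on nonnegative functions. *)
have upper : (poissonized (fun r n => h r n + a r * s)%R
    <= poissonized (fun r n => (c r * 1 + a r * n%:R) + w r * u n)%R)%E.
  apply: le_poissonized => r n; first by rewrite addr_ge0 ?mulr_ge0.
  by move: (h_approx r n); rewrite mulr1 ler_norml => /andP[]; lra.
have lower : (poissonized (fun r n => c r * 1 + a r * n%:R)%R
    <= poissonized (fun r n => (h r n + a r * s) + w r * u n)%R)%E.
  apply: le_poissonized => r n; first by rewrite addr_ge0 ?mulr_ge0.
  by move: (h_approx r n); rewrite mulr1 ler_norml => /andP[]; lra.
rewrite !poissonizedD ?Pc ?Pan ?Pas ?Pwu in upper lower; try by move=> r n;
  rewrite ?addr_ge0 ?mulr_ge0 ?h_ge0 ?c_ge0 ?a_ge0 ?w_ge0 ?u_ge0 ?ler0n.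
move: upper lower (poissonized_ge0 h_ge0); case: (poissonized h) => [x||] //.
rewrite -!EFinD !lee_fin => up lo _.
by rewrite ler_norml; apply/andP; split; lra.
Qed.

End AffineApproximation.

End Poissonized.

Lemma invr_minnS_le (R : numFieldType) n m :
  (minn n m).+1%:R^-1 <= n.+1%:R^-1 + m.+1%:R^-1 :> R.
Proof.
by case: leqP => _; rewrite ?lerDl ?lerDr invr_ge0.
Qed.

Theorem lemma2p12 (R : realType) (p : nat -> R)
  (p_ge0 : forall k, 0 <= p k)
  (p_sum1 : (\sum_(0 <= k <oo) (p k)%:E)%E = 1%E)
  (p_inf : ~ finite_set [set k | 0 < p k]) :
  forall l : nat, (1 <= l)%N ->
  exists B : R, forall j : nat, (1 <= j)%N ->
  exists T : R, forall t : R, T <= t ->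
    (`| EKt p j t l - EKn p j (Num.truncn t) l | <= B%:E)%E.
Proof.
move=> [//|k] _; exists (1 + 5 * k.+1%:R) => j _; exists 1 => t t_ge1.
have t_gt0 : 0 < t := lt_le_trans ltr01 t_ge1.
set m := Num.truncn t.
have m_ge1 : (1 <= m)%N by rewrite truncn_gt0.
have m_le_t : m%:R <= t by rewrite truncn_le ltW.
have t_lt_m1 : t < m%:R + 1 by rewrite natr1 truncnS_gt.
have p_sum_le1 : (\sum_(0 <= k <oo) (p k)%:E <= 1)%E by rewrite p_sum1.
pose W := [set r : seq nat | size r = j]; pose q := wordprob p.
have q_ge0 r : 0 <= q r := wordprob_ge0 p_ge0 r.
have q_le1 r : q r <= 1 := wordprob_le1 p_ge0 p_sum_le1 r.
have [Q esumQ /andP[Q_ge0 Q_le1]] := nonneg_le_EFin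
  (esum_ge0 (fun r _ => q_ge0 r : (0 <= (q r)%:E)%E)) (esum_wordprob_le1 p_ge0 p_sum_le1 j).
pose a r := q r * binpmf (q r) k m.
have [A esumA /andP[A_ge0 A_le_Q]] : exists2 A, \esum_(r in W) (a r)%:E = A%:E & 0 <= A <= Q.
  apply: nonneg_le_EFin; first by apply: esum_ge0 => r _; rewrite lee_fin mulr_ge0 ?binpmf_ge0.
  by rewrite -esumQ le_esum // => r _; rewrite lee_fin ler_piMr ?binpmf_le1.
have [C esumC _] : exists2 C, EKn p j m k.+1 = C%:E & 0 <= C <= m%:R * Q.
  apply: nonneg_le_EFin; first by apply: esum_ge0 => r _; rewrite lee_fin bin_tail_ge0.
  rewrite EFinM -esumQ -esumZl //.
  by apply: le_esum => r _; rewrite -EFinM lee_fin bin_tail_le.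
pose u n : R := (n%:R - m%:R) ^+ 2 * (n.+1%:R^-1 + (m%:R + 1)^-1).
have u_ge0 n : 0 <= u n by rewrite mulr_ge0 ?sqr_ge0 ?addr_ge0 ?invr_ge0.
have [U meanU /andP[U_ge0 U_le5]] : exists2 U, poisson_mean t u = U%:E & 0 <= U <= 5.
  apply: nonneg_le_EFin; first exact: poisson_mean_ge0.
  by apply: poisson_mean_sqr_dev_le; rewrite ?ler1n.
have esumW : \esum_(r in W) (q r * k.+1%:R)%:E = (Q * k.+1%:R)%:E.
  rewrite [RHS]EFinM -esumQ muleC -esumZl //.
  by apply: eq_esum => r _; rewrite -EFinM mulrC.
have box_approx r n : `|bin_tail n k.+1 (q r) - bin_tail m k.+1 (q r) - a r * (n%:R - m%:R)|
    <= q r * k.+1%:R * u n.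
  apply: le_trans (bin_tail_taylor2 (q_ge0 r) (q_le1 r) k n m) _.
  have qk_ge0 : 0 <= q r * k.+1%:R by rewrite mulr_ge0.
  rewrite /u [leRHS]mulrA ler_wpM2l ?(mulr_ge0 qk_ge0 (sqr_ge0 _)) // natr1.
  exact: invr_minnS_le.
have := poissonized_affine_approx t_gt0 (h := fun r n => bin_tail n k.+1 (q r))
  (fun r n => bin_tail_ge0 (q_ge0 r) (q_le1 r) n k.+1)
  (fun r => bin_tail_ge0 (q_ge0 r) (q_le1 r) m k.+1)
  (fun r => mulr_ge0 (q_ge0 r) (binpmf_ge0 (q_ge0 r) (q_le1 r) k m))
  (fun r => mulr_ge0 (q_ge0 r) (ler0n _ _))
  u_ge0 (ler0n _ _) esumC esumA esumW meanU box_approx.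
change (poissonized _ _ _) with (EKt p j t k.+1); rewrite esumC.
have QkU_le : Q * k.+1%:R * U <= 5 * k.+1%:R.
  apply: (le_trans (y := k.+1%:R * U)); first by rewrite -mulrA ler_piMl ?mulr_ge0.
  by rewrite mulrC ler_wpM2r.
have A_tm : 0 <= A * (t - m%:R) <= 1.
  have A_le1 : A <= 1 := le_trans A_le_Q Q_le1.
  by rewrite mulr_ge0 ?subr_ge0 //= mulr_ile1 ?subr_ge0 //; lra.
case: (EKt p j t k.+1) => [x||] //; rewrite -!EFinB !abse_EFin !lee_fin !ler_norml.
by move=> /andP[? ?]; move: A_tm => /andP[? ?]; apply/andP; split; lra.
Qed.
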